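(* Let $K$ be a finite simplicial complex equipped with two assignments of edge lengths, giving discrete geodesic distance functions $f^1_p,f^2_p$ for each vertex $p$, and let $\epsilon=\max_{p\in\mathrm{Vert}(K)}\max_{q\in\mathrm{Vert}(K)}|f^1_p(q)-f^2_p(q)|$. Fix $d$ and let $\mathcal{X}^1$ and $\mathcal{X}^2$ be subgroup filtrations of $H_d(K;\mathbb{Z}_2)$ obtained from optimal homology bases with respect to the sizes $S^1$ and $S^2$ respectively. Then $\mathrm{dist}(\mathcal{X}^1,\mathcal{X}^2)\le\epsilon$.
   Context: For a given edge-length assignment, $f_p(q)$ is the shortest-path length from vertex $p$ to vertex $q$ in the 1-skeleton of $K$, and $f_p(\sigma)=\max_{q\in\mathrm{Vert}(\sigma)}f_p(q)$ for a simplex $\sigma$. The geodesic ball $B_p^t=\{\sigma\in K:f_p(\sigma)\le t\}$ carries a class $h$ if it contains a cycle representing $h$; $r_{f_p}(h)$ is the least $t$ for which $B_p^t$ carries $h$, and the size of $h$ is $S(h)=\min_{p}r_{f_p}(h)$ ($S^1,S^2$ denote sizes computed from $f^1,f^2$). Let $\beta=\dim H_d(K;\mathbb{Z}_2)$. An optimal homology basis is a set of $\beta$ linearly independent (nonzero) classes whose sizes have minimal sum; such a basis is obtained greedily by scanning nontrivial classes in increasing order of size and keeping each one linearly independent of those already kept. Given an optimal basis $h_1,\dots,h_\beta$ sorted so that $S(h_i)\le S(h_{i+1})$, its subgroup filtration is $\mathcal{X}=\{\psi_0,\psi_1,\dots,\psi_\beta\}$ with $\psi_i=\mathrm{span}(h_1,\dots,h_i)$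 ($\psi_0$ trivial), and $S(\psi_i):=S(h_i)$ for $i\ge1$. For filtrations $\mathcal{X}^1,\mathcal{X}^2$, the projection $\mathrm{proj}(\psi^1_i,\mathcal{X}^2)$ is $\psi^2_j$ with $j$ the least index such that $\psi^1_i\subseteq\psi^2_j$ (and symmetrically). The distance is $\mathrm{dist}(\mathcal{X}^1,\mathcal{X}^2)=\max\{\max_i|S^1(\psi^1_i)-S^2(\mathrm{proj}(\psi^1_i,\mathcal{X}^2))|,\ \max_i|S^2(\psi^2_i)-S^1(\mathrm{proj}(\psi^2_i,\mathcal{X}^1))|\}$, the maxima taken over $i=1,\dots,\beta$. *)

From HB Require Import structures.
From mathcomp Require Import classical_sets reals.
From mathcomp Require Import all_boot all_order all_algebra.
Set Implicit Arguments. Unset Strict Implicit. Unset Printing Implicit Defensive.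
Import Order.TTheory GRing.Theory Num.Theory.
Local Open Scope ring_scope.

Section Defs.
Variable T : finType.
Variable R : realType.

Definition simplicial_complex (K : {set {set T}}) : Prop :=
  [/\ set0 \notin K,
      (forall s t : {set T}, s \in K -> t \subset s -> t != set0 -> t \in K)
    & (forall v : T, [set v] \in K)].

Definition F2 : Type := ('F_2)%type.
Definition chain := {ffun {set T} -> F2^o}.

Definition chi (s : {set T}) : chain := [ffun x => (x == s)%:R].

Definition boundary (c : chain) : chain :=
  [ffun t : {set T} => if t == set0 then 0
     else \sum_(s : {set T} | (t \subset s) && (#|s| == #|t|.+1)) c s].

Definition Cd (K : {set {set T}}) (d : nat) : {vspace chain} :=
  <<[seq chi s | s <- enum [set s in K | #|s| == d.+1]]>>%VS.
Definition Zd K d : {vspace chain} := (Cd K d :&: lker (linfun boundary))%VS.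
Definition Bd K d : {vspace chain} := (linfun boundary @: Cd K d.+1)%VS.
Definition betti K d : nat := (\dim (Zd K d) - \dim (Bd K d))%N.

(* A homology class is represented by a cycle z; classes of z, z' agree iff
   z - z' \in B_d.  A sequence of classes is linearly independent iff the
   representatives are cycles and are linearly independent modulo B_d. *)
Definition indep K d (zs : seq chain) : bool :=
  all (fun z => z \in Zd K d) zs &&
  (\dim (<<zs>> + Bd K d)%VS == size zs + \dim (Bd K d))%N.

Definition adj (K : {set {set T}}) (a b : T) : bool := (a != b) && ([set a; b] \in K).

Definition walk_len (l : {set T} -> R) (p : T) (w : seq T) : R :=
  \sum_(e <- zip (p :: w) w) l [set e.1; e.2].

Definition geod (K : {set {set T}}) (l : {set T} -> R) (p q : T) : R :=
  inf [set walk_len l p w | w in [set w : seq T | path (adj K) p w /\ last p w = q]]%classic.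

(* B_p^t carries the class of z: some cycle homologous to z is supported on
   simplices sigma with f_p(sigma) <= t, i.e. all of whose vertices q satisfy
   f_p(q) <= t. *)
Definition carries K d (f : T -> T -> R) (p : T) (t : R) (z : chain) : Prop :=
  exists2 z' : chain, (z' \in Zd K d) && (z' - z \in Bd K d) &
    forall s : {set T}, z' s != 0 -> forall q, q \in s -> f p q <= t.

Definition radius K d (f : T -> T -> R) (p : T) (z : chain) : R :=
  inf [set t | carries K d f p t z]%classic.

Definition hsize K d (f : T -> T -> R) (z : chain) : R :=
  inf [set r | exists p : T, r = radius K d f p z]%classic.

Definition optimal_basis K d (f : T -> T -> R) (zs : seq chain) : Prop :=
  [/\ size zs = betti K d, indep K d zs &
      forall gs : seq chain, size gs = betti K d -> indep K d gs ->
        \sum_(z <- zs) hsize K d f z <= \sum_(g <- gs) hsize K d f g].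

Definition size_sorted K d (f : T -> T -> R) (zs : seq chain) : bool :=
  sorted (fun x y => hsize K d f x <= hsize K d f y) zs.

(* psi_i = span(h_1, ..., h_i), as the subspace of Z_d it spans together with B_d *)
Definition psi K d (zs : seq chain) (i : nat) : {vspace chain} :=
  (<<take i zs>> + Bd K d)%VS.

Definition psi_size K d (f : T -> T -> R) (zs : seq chain) (i : nat) : R :=
  hsize K d f (nth 0 zs i.-1).

Definition proj_idx K d (zs1 zs2 : seq chain) (i : nat) : nat :=
  find (fun j => (psi K d zs1 i <= psi K d zs2 j)%VS) (iota 0 (size zs2).+1).

Definition filt_dist K d (f1 f2 : T -> T -> R) (zs1 zs2 : seq chain) : R :=
  Num.max
    (\big[Num.max/0]_(1 <= i < (size zs1).+1)
        `|psi_size K d f1 zs1 i - psi_size K d f2 zs2 (proj_idx K d zs1 zs2 i)|)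
    (\big[Num.max/0]_(1 <= i < (size zs2).+1)
        `|psi_size K d f2 zs2 i - psi_size K d f1 zs1 (proj_idx K d zs2 zs1 i)|).

Definition geod_eps K (l1 l2 : {set T} -> R) : R :=
  \big[Num.max/0]_(p : T) \big[Num.max/0]_(q : T) `|geod K l1 p q - geod K l2 p q|.

End Defs.

(* Sizes are 1-Lipschitz in the distance functions: a cycle carried by the
   f^1-ball of radius t around p is carried by the f^2-ball of radius t + eps,
   so |S^1(h) - S^2(h)| <= eps for every class h.  An exchange argument shows
   that for a size-sorted optimal basis every class outside psi_(k-1) has size
   at least S(h_k).  If proj(psi^1_i) = psi^2_j, some h^1_m with m <= i lies
   outside psi^2_(j-1), whence S^2(h^2_j) <= S^2(h^1_m) <= S^1(h^1_m) + eps
   <= S^1(h^1_i) + eps; dually, by counting dimensions some h^2_m with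
   m <= i <= j lies outside psi^1_(i-1), whence S^1(h^1_i) <= S^2(h^2_j) + eps. *)

From HB Require Import structures.
From mathcomp Require Import boolp classical_sets reals.
From mathcomp Require Import zify lra.
From mathcomp Require Import all_boot all_order all_algebra.
Set Implicit Arguments. Unset Strict Implicit.
Import Order.TTheory GRing.Theory Num.Theory.
Local Open Scope ring_scope.

Lemma sumr_pred1_indicator (S : pzSemiRingType) (I : finType) (P : pred I) j :
  \sum_(i | P i) ((i == j)%:R : S) = (P j)%:R.
Proof.
case Pj: (P j); last first.
  by rewrite big1 // => i Pi; case: eqP Pi => // ->; rewrite Pj.
by rewrite (bigD1 j) //= eqxx big1 ?addr0 // => i /andP[_ /negbTE ->].
Qed.

Lemma sumr_indicator (S : pzSemiRingType) (I : finType) (P Q : pred I) :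
  \sum_(i | P i) ((Q i)%:R : S) = #|[pred i | P i && Q i]|%:R.
Proof.
rewrite -sumr_const [RHS](eq_bigl (fun i => P i && Q i)) //.
by rewrite big_mkcondr /=; apply: eq_bigr => i _; case: (Q i).
Qed.

Section Boundary.
Variable T : finType.
Implicit Types (s t x : {set T}) (c : chain T).

Lemma boundary_is_linear : linear (@boundary T).
Proof.
move=> a c c'; apply/ffunP => t; rewrite !ffunE.
case: ifP => _; first by rewrite scaler0 addr0.
by rewrite scaler_sumr -big_split; apply: eq_bigr => s _; rewrite !ffunE.
Qed.

HB.instance Definition _ :=
  GRing.isLinear.Build _ _ _ _ (@boundary T) boundary_is_linear.

Lemma boundary_chi s : boundary (chi s) =
  [ffun x => ((x != set0) && (x \subset s) && (#|s| == #|x|.+1))%:R].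
Proof.
apply/ffunP => x; rewrite !ffunE; case: eqP => [->|_] //=.
under eq_bigr => y _ do rewrite ffunE.
by rewrite sumr_pred1_indicator.
Qed.

Lemma boundary_chi_facets s (d : nat) : #|s| = d.+2 ->
  boundary (chi s) = \sum_(t : {set T} | (t \subset s) && (#|t| == d.+1)) chi t.
Proof.
move=> hs; rewrite boundary_chi; apply/ffunP => x; rewrite sum_ffunE !ffunE.
under eq_bigr => y _ do rewrite ffunE eq_sym.
rewrite sumr_pred1_indicator hs eqSS [_ == #|x|]eq_sym.
by case: (eqVneq x set0) => [->|] //=; rewrite cards0 andbF.
Qed.

Lemma card_faces_between x s (d : nat) : #|s| = d.+2 -> x \subset s -> #|x| = d ->
  #|[set t : {set T} | [&& t \subset s, #|t| == d.+1, x \subset t & #|t| == #|x|.+1]]|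
  = 2%N.
Proof.
move=> hs xs hx.
have -> : [set t : {set T} | [&& t \subset s, #|t| == d.+1, x \subset t & #|t| == #|x|.+1]]
   = [set a |: x | a in s :\: x].
  apply/setP => t; rewrite inE; apply/idP/imsetP.
  - case/and4P => ts _ xt /eqP ht.
    have : #|t :\: x| == 1%N by rewrite cardsD (setIidPr xt) ht subSnn.
    case/cards1P => a ha; exists a.
      have : a \in t :\: x by rewrite ha set11.
      by rewrite !inE => /andP[-> /(subsetP ts)->].
    by rewrite -ha setUC -{1}(setIidPr xt) setID.
  - case=> a; rewrite !inE => /andP[ax as_] ->.
    by rewrite subUset sub1set as_ xs cardsU1 ax hx subsetUr eqxx.
rewrite card_in_imset; last first.
  move=> a b; rewrite !inE => /andP[ax _] /andP[bx _] e.
  have : a \in b |: x by rewrite -e setU11.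
  by rewrite !inE (negbTE ax) orbF => /eqP.
by rewrite cardsD (setIidPr xs) hs hx; lia.
Qed.

(* Each d-face x of a (d+1)-simplex s lies in exactly two of its facets,
   and 2 = 0 in F_2. *)
Lemma boundary_boundary_chi s (d : nat) : #|s| = d.+2 ->
  boundary (boundary (chi s)) = 0.
Proof.
move=> hs; rewrite (boundary_chi_facets hs) raddf_sum.
apply/ffunP => x; rewrite sum_ffunE !ffunE.
under eq_bigr => t _ do rewrite /= boundary_chi ffunE.
rewrite sumr_indicator; case: (eqVneq x set0) => [->|xn0].
  by rewrite (@eq_card0 _ [pred i | _ & _]) // => t; rewrite !inE /= andbF.
case xs: ((x \subset s) && (#|x| == d)).
  case/andP: xs => xs /eqP hx.
  rewrite (@eq_card _ _ [set t : {set T} |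
      [&& t \subset s, #|t| == d.+1, x \subset t & #|t| == #|x|.+1]]); last first.
    by move=> t; rewrite !inE /= -!andbA.
  by rewrite card_faces_between //; apply/val_inj.
rewrite (@eq_card0 _ [pred i | _ & _]) // => t; rewrite !inE /=.
apply: contraFF xs => /and3P[/andP[ts /eqP ht] xt /eqP e].
by rewrite (subset_trans xt ts) /= -eqSS -e ht.
Qed.

Lemma Bd_sub_Zd (K : {set {set T}}) d :
  simplicial_complex K -> (Bd K d <= Zd K d)%VS.
Proof.
case=> _ Kface _.
rewrite /Bd /Cd limg_span; apply/span_subvP => c /mapP[c0 /mapP[s]].
rewrite mem_enum inE => /andP[sK /eqP hs] -> ->.
rewrite lfunE /= memv_cap memv_ker lfunE /= (boundary_boundary_chi hs) eqxx andbT.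
rewrite (boundary_chi_facets hs); apply: memv_suml => t /andP[ts /eqP ht].
apply: memv_span; apply/mapP; exists t => //.
rewrite mem_enum inE ht eqxx andbT; apply: Kface ts _ => //.
by apply: contra_eqN ht => /eqP ->; rewrite cards0.
Qed.
End Boundary.

Section InfStability.
Variable R : realType.
Implicit Types (A B : set R) (e : R).

Lemma inf_le_addr A B e : has_inf A ->
  (forall a, A a -> exists2 b, B b & b <= a + e) ->
  (forall b, B b -> exists2 a, A a & a <= b + e) ->
  has_inf B /\ inf B <= inf A + e.
Proof.
move=> [[a0 Aa0] [m lbm]] AB BA.
have hB : has_inf B.
  split; first by case: (AB a0 Aa0) => b Bb _; exists b.
  exists (m - e) => b Bb; case: (BA b Bb) => a Aa le.
  by have := lbm a Aa; lra.
split=> //; rewrite -lerBlDr; apply: lb_le_inf; first by exists a0.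
move=> a Aa; case: (AB a Aa) => b Bb le.
by have := ge_inf hB.2 Bb; lra.
Qed.

Lemma dist_inf_le A B e : 0 <= e ->
  (forall a, A a -> exists2 b, B b & b <= a + e) ->
  (forall b, B b -> exists2 a, A a & a <= b + e) ->
  `|inf A - inf B| <= e.
Proof.
move=> e0 AB BA; case: (pselect (has_inf A)) => hA.
  have [hB le1] := inf_le_addr hA AB BA.
  have [_ le2] := inf_le_addr hB BA AB.
  by rewrite ler_norml; apply/andP; split; lra.
(* Neither infimum exists, so both take the default value [0]. *)
have hB : ~ has_inf B by move=> hB; apply: hA; have [] := inf_le_addr hB BA AB.
by rewrite (inf_out hA) (inf_out hB) subrr normr0.
Qed.
End InfStability.

Section SizeLipschitz.
Variables (T : finType) (R : realType) (K : {set {set T}}) (d : nat).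
Implicit Types (f : T -> T -> R) (z : chain T).

Lemma carries_le_add f1 f2 e p t z :
  (forall q, f2 p q <= f1 p q + e) ->
  carries K d f1 p t z -> carries K d f2 p (t + e) z.
Proof.
move=> f21 [z' hz' supp]; exists z' => // s zs q qs.
by have := supp s zs q qs; have := f21 q; lra.
Qed.

Lemma radius_lipschitz f1 f2 e p z : 0 <= e ->
  (forall q, `|f1 p q - f2 p q| <= e) ->
  `|radius K d f1 p z - radius K d f2 p z| <= e.
Proof.
move=> e0 f12; apply: dist_inf_le => // t ht; exists (t + e) => //;
  apply: carries_le_add ht => q; have := f12 q; rewrite ler_norml; lra.
Qed.

Lemma hsize_lipschitz f1 f2 e z : 0 <= e ->
  (forall p q, `|f1 p q - f2 p q| <= e) ->
  `|hsize K d f1 z - hsize K d f2 z| <= e.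
Proof.
move=> e0 f12; have rad p := radius_lipschitz z e0 (f12 p).
apply: dist_inf_le => // _ [p ->].
  by exists (radius K d f2 p z); [exists p | have := rad p; rewrite ler_norml; lra].
by exists (radius K d f1 p z); [exists p | have := rad p; rewrite ler_norml; lra].
Qed.
End SizeLipschitz.

Section SortedSizes.
Variables (T : finType) (R : realType) (K : {set {set T}}) (d : nat).
Implicit Types (f : T -> T -> R) (zs : seq (chain T)).

Lemma hsize_nth_le_set_nth f zs m g : optimal_basis K d f zs -> (m < size zs)%N ->
  indep K d (set_nth 0 zs m g) -> hsize K d f (nth 0 zs m) <= hsize K d f g.
Proof.
case=> size_zs _ opt_zs lt_m ind_gs.
have := opt_zs _ _ ind_gs; rewrite size_set_nth maxnE subnKC // => /(_ size_zs).
rewrite set_nthE lt_m {1}(_ : zs = take m zs ++ nth 0 zs m :: drop m.+1 zs).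
  by rewrite !big_cat !big_cons /=; lra.
by rewrite -drop_nth ?cat_take_drop.
Qed.

Lemma sorted_hsize_nth f zs i j : size_sorted K d f zs -> (i <= j)%N -> (j < size zs)%N ->
  hsize K d f (nth 0 zs i) <= hsize K d f (nth 0 zs j).
Proof.
move=> sorted_zs le_ij lt_j.
apply: (sorted_leq_nth (leT := fun x y => hsize K d f x <= hsize K d f y)) => //.
- by move=> ? ? ?; apply: le_trans.
- by rewrite inE (leq_ltn_trans le_ij).
Qed.

Lemma hsize_le_psi_size f zs i z : size_sorted K d f zs -> (i <= size zs)%N ->
  z \in take i zs -> hsize K d f z <= psi_size K d f zs i.
Proof.
move=> sorted_zs le_i /(nthP 0) [k]; rewrite size_takel // => lt_ki <-.
by rewrite nth_take // /psi_size; apply: sorted_hsize_nth => //; lia.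
Qed.

End SortedSizes.

Section Filtration.
Variables (T : finType) (K : {set {set T}}) (d : nat).
Local Notation B := (Bd K d).
Local Notation Z := (Zd K d).
Local Notation psi := (psi K d).
Implicit Types (zs : seq (chain T)) (g : chain T).

Lemma psi_dim zs i : indep K d zs -> (i <= size zs)%N ->
  \dim (psi zs i) = (i + \dim B)%N.
Proof.
case/andP => _ /eqP dim_zs le_i.
have split_zs : (<<zs>> + B = psi zs i + <<drop i zs>>)%VS.
  rewrite /psi -{1}(cat_take_drop i zs) span_cat -addvA.
  by rewrite [(<<drop _ _>> + _)%VS]addvC addvA.
have arith (a b c x n : nat) : (n + x <= a + c)%N -> (a <= b + x)%N ->
  (c <= n - i)%N -> (b <= i)%N -> (i <= n)%N -> a = (i + x)%N by lia.
apply: (arith _ (\dim <<take i zs>>) (\dim <<drop i zs>>) _ _ _ _ _ _ le_i).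
- by rewrite -dim_zs split_zs; apply: (dimv_add_leqif _ _).1.
- exact: (dimv_add_leqif _ _).1.
- by rewrite -size_drop dim_span.
- by rewrite -[X in (_ <= X)%N](size_takel le_i) dim_span.
Qed.

Lemma psi_mono zs i j : (i <= j)%N -> (psi zs i <= psi zs j)%VS.
Proof.
move=> le_ij; apply: addvS (subvv _); apply: sub_span => z.
by rewrite -(take_takel zs le_ij) => /mem_take.
Qed.

Lemma mem_psi_take zs i z : z \in take i zs -> z \in psi zs i.
Proof. by move=> z_i; apply: (subvP (addvSl _ _)); apply: memv_span. Qed.

Lemma psi_subvPn zs i (V : {vspace chain T}) : (B <= V)%VS ->
  ~~ (psi zs i <= V)%VS -> exists2 z, z \in take i zs & z \notin V.
Proof.
move=> BV; apply: contraNP => no_z; rewrite subv_add BV andbT.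
by apply/span_subvP => z z_i; apply/idPn => zV; apply: no_z; exists z.
Qed.

Lemma psiS_sub_addv_line zs m g : indep K d zs -> (m < size zs)%N ->
  g \in psi zs m.+1 -> g \notin psi zs m -> (psi zs m.+1 <= psi zs m + <[g]>)%VS.
Proof.
move=> ind_zs lt_m g_m1 g_m.
have sub_m1 : (psi zs m + <[g]> <= psi zs m.+1)%VS.
  by rewrite subv_add psi_mono // -memvE.
have := ltn_leqif (dimv_leqif_sup (addvSl (psi zs m) <[g]>)).
rewrite subv_add subvv -memvE (negbTE g_m) => /= lt_dim.
rewrite -(eq_leqif (dimv_leqif_sup sub_m1)) eqn_leq dimvS //=.
by move: lt_dim; rewrite !psi_dim // ltnW.
Qed.

Lemma indep_set_nth zs m g : indep K d zs -> (m < size zs)%N -> g \in Z ->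
  g \in psi zs m.+1 -> g \notin psi zs m -> indep K d (set_nth 0 zs m g).
Proof.
move=> ind_zs lt_m gZ g_m1 g_m; have /andP[/allP zsZ /eqP dim_zs] := ind_zs.
have zs_split : zs = take m zs ++ nth 0 zs m :: drop m.+1 zs.
  by rewrite -drop_nth ?cat_take_drop.
rewrite set_nthE lt_m; set gs := _ ++ _.
have size_gs : size gs = size zs by rewrite [in RHS]zs_split !size_cat.
have mem_gs z : z \in gs -> z \in (<<gs>> + B)%VS.
  by move=> z_gs; apply: (subvP (addvSl _ _)); apply: memv_span.
have psi_sub : (psi zs m + <[g]> <= <<gs>> + B)%VS.
  rewrite subv_add -memvE mem_gs ?mem_cat ?mem_head ?orbT // andbT.
  by rewrite addvS // sub_span // => z z_m; rewrite mem_cat z_m.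
apply/andP; split.
  by apply/allP => z; rewrite mem_cat in_cons => /or3P[/mem_take/zsZ | /eqP-> | /mem_drop/zsZ].
rewrite size_gs -dim_zs eqn_leq; apply/andP; split.
  rewrite dim_zs -size_gs; apply: leq_trans (dimv_add_leqif _ _).1 _.
  by rewrite leq_add2r dim_span.
apply/dimvS; rewrite subv_add addvSr andbT; apply/span_subvP => z.
rewrite {1}zs_split mem_cat in_cons => /or3P[z_m | /eqP-> | z_m].
- by rewrite mem_gs // mem_cat z_m.
- apply: subvP psi_sub _ _; apply: subvP (psiS_sub_addv_line ind_zs lt_m g_m1 g_m) _ _.
  by apply: mem_psi_take; rewrite (take_nth 0 lt_m) mem_rcons mem_head.
- by rewrite mem_gs // mem_cat in_cons z_m !orbT.
Qed.

Hypothesis Bd_sub_Zd : (B <= Z)%VS.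

Lemma psi_sub_Zd zs i : indep K d zs -> (psi zs i <= Z)%VS.
Proof.
case/andP => /allP zsZ _; rewrite subv_add Bd_sub_Zd andbT.
by apply/span_subvP => z /mem_take /zsZ.
Qed.

Lemma Zd_sub_psi_size zs : indep K d zs -> size zs = betti K d ->
  (Z <= psi zs (size zs))%VS.
Proof.
move=> ind_zs size_zs; rewrite -(eq_leqif (dimv_leqif_sup (psi_sub_Zd _ ind_zs))).
rewrite psi_dim // size_zs /betti; have := dimvS Bd_sub_Zd; lia.
Qed.

Variable R : realType.
Implicit Types f : T -> T -> R.

(* Exchange argument: replacing by [g] the first basis element whose
   filtration level contains [g] yields another basis, so optimality and
   sortedness bound the [k]-th size by the size of [g]. *)
Lemma hsize_nth_le_notin_psi f zs g k :
  optimal_basis K d f zs -> size_sorted K d f zs -> g \in Z ->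
  (k < size zs)%N -> g \notin psi zs k -> hsize K d f (nth 0 zs k) <= hsize K d f g.
Proof.
move=> opt_zs sorted_zs gZ lt_k g_k; have [size_zs ind_zs _] := opt_zs.
have g_full : g \in psi zs (size zs).
  exact: subvP (Zd_sub_psi_size ind_zs size_zs) _ gZ.
case: (ex_minnP (ex_intro (fun m => g \in psi zs m) _ g_full)) => m g_m min_m.
have le_m := min_m _ g_full.
have lt_km : (k < m)%N.
  by rewrite ltnNge; apply: contra g_k => le_mk; apply: subvP (psi_mono zs le_mk) _ g_m.
case: m g_m min_m le_m lt_km => // m g_m1 min_m le_m lt_km.
have g_m : g \notin psi zs m by apply/negP => /min_m; rewrite ltnn.
apply: le_trans (hsize_nth_le_set_nth opt_zs le_m (indep_set_nth ind_zs le_m gZ g_m1 g_m)).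
exact: sorted_hsize_nth.
Qed.

End Filtration.

Section Projection.
Variables (T : finType) (R : realType) (K : {set {set T}}) (d : nat).
Variables (f1 f2 : T -> T -> R) (zs1 zs2 : seq (chain T)) (e : R).
Hypothesis Bd_sub_Zd : (Bd K d <= Zd K d)%VS.
Hypotheses (opt1 : optimal_basis K d f1 zs1) (sorted1 : size_sorted K d f1 zs1).
Hypotheses (opt2 : optimal_basis K d f2 zs2) (sorted2 : size_sorted K d f2 zs2).
Hypothesis hsize_close : forall z, `|hsize K d f1 z - hsize K d f2 z| <= e.
Local Notation psi := (psi K d).
Local Notation proj := (proj_idx K d zs1 zs2).

Lemma proj_idx_spec i : (0 < i <= size zs1)%N ->
  [/\ (i <= proj i <= size zs2)%N, (psi zs1 i <= psi zs2 (proj i))%VS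
    & ~~ (psi zs1 i <= psi zs2 (proj i).-1)%VS].
Proof.
case/andP=> gt0_i le_i; case: opt1 => size1 ind1 _; case: opt2 => size2 ind2 _.
set P := fun j => (psi zs1 i <= psi zs2 j)%VS.
have has_P : has P (iota 0 (size zs2).+1).
  apply/hasP; exists (size zs2); first by rewrite mem_iota ltnSn.
  exact: subv_trans (psi_sub_Zd _ _ ind1) (Zd_sub_psi_size _ ind2 size2).
have lt_proj : (proj i < (size zs2).+1)%N.
  by rewrite -[X in (_ < X)%N](size_iota 0) -has_find.
have P_proj : P (proj i) by have := nth_find 0 has_P; rewrite nth_iota.
have le_proj : (i <= proj i)%N.
  by have := dimvS P_proj; rewrite !psi_dim // leq_add2r.
split; [by rewrite le_proj -ltnS | by [] |].
have lt_pred : ((proj i).-1 < proj i)%N by rewrite ltn_predL (leq_trans gt0_i).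
have /negbT := before_find 0 lt_pred.
by rewrite nth_iota ?add0n // (ltn_trans lt_pred).
Qed.

Lemma psi_size_proj_le i : (0 < i <= size zs1)%N ->
  psi_size K d f2 zs2 (proj i) <= psi_size K d f1 zs1 i + e.
Proof.
move=> lt_i; have [/andP[le_proj le_size] _ not_sub] := proj_idx_spec lt_i.
have [gt0_i le_i] := andP lt_i.
have [z z_i z_proj] := psi_subvPn (addvSr _ _) not_sub.
have zZ : z \in Zd K d.
  by case: opt1 => _ /andP[/allP zsZ _] _; apply/zsZ/mem_take/z_i.
have lt_pred : ((proj i).-1 < size zs2)%N.
  by apply: leq_trans le_size; rewrite ltn_predL (leq_trans gt0_i).
apply: le_trans (hsize_nth_le_notin_psi Bd_sub_Zd opt2 sorted2 zZ lt_pred z_proj) _.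
apply: le_trans (_ : _ <= hsize K d f1 z + e) _; last first.
  by rewrite lerD2r (hsize_le_psi_size sorted1 le_i z_i).
by move: (hsize_close z); rewrite ler_distl lerBlDr => /andP[].
Qed.

Lemma psi_size_le_proj i : (0 < i <= size zs1)%N ->
  psi_size K d f1 zs1 i <= psi_size K d f2 zs2 (proj i) + e.
Proof.
move=> lt_i; have [/andP[le_proj le_size] _ _] := proj_idx_spec lt_i.
have [gt0_i le_i] := andP lt_i.
case: opt1 => size1 ind1 _; case: opt2 => size2 ind2 _.
have lt_pred : (i.-1 < size zs1)%N by apply: leq_trans le_i; rewrite ltn_predL.
have not_sub : ~~ (psi zs2 i <= psi zs1 i.-1)%VS.
  have le_i2 : (i <= size zs2)%N by rewrite size2 -size1.
  apply/negP => /dimvS; rewrite (psi_dim ind2 le_i2).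
  rewrite (psi_dim ind1 (ltnW lt_pred)).
  by rewrite leq_add2r leqNgt ltn_predL gt0_i.
have [y y_i y_pred] := psi_subvPn (addvSr _ _) not_sub.
have yZ : y \in Zd K d by case/andP: ind2 => /allP zsZ _; apply/zsZ/mem_take/y_i.
have y_proj : y \in take (proj i) zs2.
  by move: y_i; rewrite -(take_takel _ le_proj) => /mem_take.
apply: le_trans (hsize_nth_le_notin_psi Bd_sub_Zd opt1 sorted1 yZ lt_pred y_pred) _.
apply: le_trans (_ : _ <= hsize K d f2 y + e) _; last first.
  by rewrite lerD2r (hsize_le_psi_size sorted2 le_size y_proj).
by move: (hsize_close y); rewrite ler_distl => /andP[].
Qed.

Lemma dist_psi_size_proj i : (0 < i <= size zs1)%N ->
  `|psi_size K d f1 zs1 i - psi_size K d f2 zs2 (proj i)| <= e.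
Proof.
by move=> lt_i; rewrite ler_distl lerBlDr (psi_size_proj_le lt_i) (psi_size_le_proj lt_i).
Qed.
End Projection.

Unset Implicit Arguments.

Theorem theorem3p5 (T : finType) (R : realType) (K : {set {set T}})
    (l1 l2 : {set T} -> R) (d : nat) (zs1 zs2 : seq (chain T)) :
  simplicial_complex K ->
  (forall e : {set T}, e \in K -> #|e| = 2%N -> 0 <= l1 e /\ 0 <= l2 e) ->
  (forall p q : T, exists w : seq T, path (adj K) p w /\ last p w = q) ->
  optimal_basis K d (geod K l1) zs1 -> size_sorted K d (geod K l1) zs1 ->
  optimal_basis K d (geod K l2) zs2 -> size_sorted K d (geod K l2) zs2 ->
  filt_dist K d (geod K l1) (geod K l2) zs1 zs2 <= geod_eps K l1 l2.
Proof.
move=> K_cplx _ _ opt1 sorted1 opt2 sorted2.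
set e := geod_eps K l1 l2.
have e_ge0 : 0 <= e by apply: bigmax_ge_id.
have geod_close p q : `|geod K l1 p q - geod K l2 p q| <= e.
  apply: le_trans (le_bigmax _ _ p).
  exact: (le_bigmax _ (fun q => `|geod K l1 p q - geod K l2 p q|) q).
have close12 z := hsize_lipschitz K d z e_ge0 geod_close.
have close21 z : `|hsize K d (geod K l2) z - hsize K d (geod K l1) z| <= e.
  by rewrite distrC close12.
have BZ := Bd_sub_Zd d K_cplx.
rewrite /filt_dist ge_max; apply/andP; split;
  rewrite big_nat_cond; apply: bigmax_le => // i; rewrite ltnS andbT => lt_i.
- exact: (dist_psi_size_proj BZ opt1 sorted1 opt2 sorted2 close12).
- exact: (dist_psi_size_proj BZ opt2 sorted2 opt1 sorted1 close21).
Qed.
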